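(* Let $p\equiv1\pmod8$ and $q\equiv3\pmod8$ be primes with $\left(\frac pq\right)=1$, $\mathbb{K}=\mathbb{Q}(\sqrt2,\sqrt p,\sqrt q)$, and write $\varepsilon_{2pq}=x+y\sqrt{2pq}$, $\varepsilon_{pq}=v+w\sqrt{pq}$ with integers $x,y,v,w$. For $\eta\in\mathbb{K}$ and $\sigma\in\mathrm{Gal}(\mathbb{K}/\mathbb{Q})$ put $\eta^{1+\sigma}=\eta\sigma(\eta)$. Then $\varepsilon_{2pq}$ and $\varepsilon_{pq}$ are squares in $\mathbb{K}$ and, for either square root $\eta$ of $\varepsilon_{2pq}$ in $\mathbb{K}$, the values $(\eta^{1+\tau_2},\eta^{1+\tau_1\tau_2},\eta^{1+\tau_1\tau_3},\eta^{1+\tau_2\tau_3},\eta^{1+\tau_1})$ are: $(-1,-\varepsilon_{2pq},-\varepsilon_{2pq},\varepsilon_{2pq},1)$ if $x-1$ is a square in $\mathbb{N}$; $(1,\varepsilon_{2pq},-\varepsilon_{2pq},-\varepsilon_{2pq},1)$ if $p(x-1)$ is a square in $\mathbb{N}$; $(-1,-\varepsilon_{2pq},\varepsilon_{2pq},-\varepsilon_{2pq},1)$ if $2p(x+1)$ is a square in $\mathbb{N}$. For either square root $\eta$ of $\varepsilon_{pq}$ in $\mathbb{K}$, the same tuple equals: $(-1,1,1,\varepsilon_{pq},-\varepsilon_{pq})$ if $v-1$ is a square in $\mathbb{N}$; $(1,-1,1,-\varepsilon_{pq},-\varepsilon_{pq})$ if $p(v-1)$ is a square in $\mathbb{N}$;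 $(-1,-1,1,-\varepsilon_{pq},\varepsilon_{pq})$ if $2p(v+1)$ is a square in $\mathbb{N}$.
   Context: For squarefree $d>1$, $\varepsilon_d>1$ is the fundamental unit of $\mathbb{Q}(\sqrt d)$. Under the hypotheses, exactly one of $x-1$, $p(x-1)$, $2p(x+1)$ is a square in $\mathbb{N}$ and exactly one of $v-1$, $p(v-1)$, $2p(v+1)$ is. $\tau_1,\tau_2,\tau_3\in\mathrm{Gal}(\mathbb{K}/\mathbb{Q})$: $\tau_1$ sends $\sqrt2\mapsto-\sqrt2$ and fixes $\sqrt p,\sqrt q$; $\tau_2$ sends $\sqrt p\mapsto-\sqrt p$ and fixes $\sqrt2,\sqrt q$; $\tau_3$ sends $\sqrt q\mapsto-\sqrt q$ and fixes $\sqrt2,\sqrt p$. *)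

From HB Require Import structures.
From mathcomp Require Import all_boot all_order all_algebra all_field.
Set Implicit Arguments. Unset Strict Implicit. Unset Printing Implicit Defensive.
Import Order.TTheory GRing.Theory Num.Theory.
Local Open Scope ring_scope.

(* All number fields are realised inside algC (algebraic complex numbers);
   sqrtC n is the positive real square root of n >= 0. *)

Definition legendre_is_one (a q : nat) : Prop :=
  ~~ (q %| a)%N /\ exists t : nat, (t ^ 2 = a %[mod q])%N.

(* Q-span of the products sqrt2^a sqrtp^b sqrtq^c, i.e. the field
   K = Q(sqrt 2, sqrt p, sqrt q) as a subset of algC. *)
Definition inK (p q : nat) (z : algC) : Prop :=
  exists c : bool -> bool -> bool -> rat,
    z = \sum_(a : bool) \sum_(b : bool) \sum_(e : bool)
          ratr (c a b e) * sqrtC 2 ^+ a * sqrtC p%:R ^+ b * sqrtC q%:R ^+ e.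

(* a + b sqrt d is a unit of Z[sqrt d] (the ring of integers of Q(sqrt d)
   when d = 2,3 mod 4), i.e. has norm +-1. *)
Definition unitZsqrt (d : nat) (a b : int) : Prop :=
  a ^+ 2 - d%:Z * b ^+ 2 = 1 \/ a ^+ 2 - d%:Z * b ^+ 2 = -1.

Definition zsqrt (d : nat) (a b : int) : algC := a%:~R + b%:~R * sqrtC d%:R.

Definition fund_unit (d : nat) (x y : int) : Prop :=
  [/\ unitZsqrt d x y, 1 < zsqrt d x y &
      forall a b : int, unitZsqrt d a b -> 1 < zsqrt d a b ->
        zsqrt d x y <= zsqrt d a b].

Definition is_nat_square (n : int) : Prop := exists m : nat, n = (m ^ 2)%N%:Z.

Definition norm_tuple (t1 t2 t3 : algC -> algC) (eta : algC) :=
  (eta * t2 eta, eta * t1 (t2 eta), eta * t1 (t3 eta), eta * t2 (t3 eta),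
   eta * t1 eta).

From HB Require Import structures.
From mathcomp Require Import all_boot all_order all_algebra all_field.
From mathcomp Require Import zify ring.
Import Order.TTheory GRing.Theory Num.Theory.

(* Both units have norm +1: a unit of norm -1 would give a^2 + 1 = D b^2, which is
   impossible modulo 8 because pq = 3 (mod 4) and 2pq = 6 (mod 8).  Writing
   e = x + y sqrt D, we get (x - 1)(x + 1) = D y^2 where the two factors have gcd 1
   or 2; hence x - 1 = d1 u1^2 and x + 1 = d2 u2^2 with d1, d2 dividing 2pq, and
   (u1 sqrt d1 +- u2 sqrt d2) / sqrt 2 is a square root of e lying in K.
   For the norms, suppose c (x + s) = m^2 with s = +-1 and c in {1, p, 2p}.  Then
   A := m / sqrt (2c) and B := y sqrt D / (2A) satisfy (A + B)^2 = e and
   A^2 - B^2 = s, so every square root of e is +-(A + B).  Each tau in Gal(K/Q)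
   multiplies A and sqrt D by signs (-1)^a and (-1)^d, whence
   eta tau(eta) = (-1)^a e if d = 0 and eta tau(eta) = (-1)^a s if d = 1. *)

Set Implicit Arguments.
Unset Strict Implicit.
Unset Printing Implicit Defensive.

Lemma coprime_mul_eq_square z a b k : 0 < a -> coprime a b -> a * b = k * z ^ 2 ->
  exists d u, d %| k /\ a = d * u ^ 2.
Proof.
elim/ltn_ind: z a b => z IH a b a_gt0 co_ab eab.
have [z_le1 | z_gt1] := leqP z 1.
  case: z z_le1 eab {IH} => [_ | [_ | //]] eab.
    have b0 : b = 0.
      by move: eab; rewrite muln0 => /eqP; rewrite muln_eq0 eqn0Ngt a_gt0 => /eqP.
    by exists 1, 1; move: co_ab; rewrite b0 /coprime gcdn0 => /eqP ->.
  by exists a, 1; rewrite muln1 -(muln1 k) -eab dvdn_mulr.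
set r := pdiv z; have r_prime : prime r := pdiv_prime z_gt1.
have [z' ez] : exists z', z = z' * r by apply/dvdnP; exact: pdiv_dvd.
have r_gt1 := prime_gt1 r_prime.
have z'_lt : z' < z by rewrite ez; nia.
have r2_ab : r ^ 2 %| a * b by rewrite eab ez expnMn mulnA dvdn_mull.
have eq_div a' b' : a * b = r ^ 2 * (a' * b') -> a' * b' = k * z' ^ 2.
  move=> e; apply/eqP; rewrite -(@eqn_pmul2l (r ^ 2)) ?expn_gt0 ?(ltnW r_gt1) //.
  by rewrite -e eab ez expnMn; apply/eqP; nia.
have [r_a | r_na] := boolP (r %| a).
  have co_r2b : coprime (r ^ 2) b.
    rewrite coprime_pexpl // prime_coprime //; apply/negP => r_b.
    have : r %| gcdn a b by rewrite dvdn_gcd r_a.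
    by rewrite (eqP co_ab) dvdn1 => /eqP r1; rewrite r1 in r_gt1.
  have [a' ea] : exists a', a = a' * r ^ 2 by apply/dvdnP; rewrite -(Gauss_dvdl _ co_r2b).
  have a'_gt0 : 0 < a' by move: a_gt0; rewrite ea muln_gt0 => /andP[].
  have co_a'b : coprime a' b by apply: coprime_dvdl co_ab; rewrite ea dvdn_mulr.
  have eab' : a' * b = k * z' ^ 2 by apply: eq_div; rewrite ea; nia.
  have [d [u [d_k eu]]] := IH z' z'_lt a' b a'_gt0 co_a'b eab'.
  by exists d, (r * u); split => //; rewrite ea eu; nia.
have co_r2a : coprime (r ^ 2) a by rewrite coprime_pexpl // prime_coprime.
have [b' eb] : exists b', b = b' * r ^ 2 by apply/dvdnP; rewrite -(Gauss_dvdr _ co_r2a).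
have co_ab' : coprime a b' by apply: coprime_dvdr co_ab; rewrite eb dvdn_mulr.
have eab' : a * b' = k * z' ^ 2 by apply: eq_div; rewrite eb; nia.
exact: IH z' z'_lt a b' a_gt0 co_ab' eab'.
Qed.

Lemma dvdn_prime_mul r d m : prime r -> d %| r * m ->
  exists (e : bool) d', d = r ^ e * d' /\ d' %| m.
Proof.
move=> r_prime d_rm; have [r_d | r_nd] := boolP (r %| d).
  case/dvdnP: r_d d_rm => d' -> d_rm; exists true, d'; split; first by rewrite mulnC.
  by move: d_rm; rewrite mulnC dvdn_pmul2l // prime_gt0.
exists false, d; split; first by rewrite mul1n.
by rewrite -(@Gauss_dvdr _ r) // coprime_sym prime_coprime.
Qed.

Definition mono_square (p q n : nat) :=
  exists (a b c : bool) (u : nat), n = 2 ^ a * p ^ b * q ^ c * u ^ 2.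

Lemma mono_square_dvd p q d u : prime p -> prime q -> d %| 2 * p * q ->
  mono_square p q (d * u ^ 2).
Proof.
rewrite -mulnA => p_prime q_prime d_2pq.
have [a [d1 [-> d1_pq]]] := dvdn_prime_mul (isT : prime 2) d_2pq.
rewrite -(muln1 q) in d1_pq.
have [b [d2 [-> d2_q]]] := dvdn_prime_mul p_prime d1_pq.
have [c [d3 [-> d3_1]]] := dvdn_prime_mul q_prime d2_q; move: d3_1; rewrite dvdn1 => /eqP ->.
by exists a, b, c, u; rewrite muln1 !mulnA.
Qed.

Lemma mono_square_double p q n : mono_square p q n -> mono_square p q (2 * n).
Proof.
move=> [[] [b [c [u ->]]]].
  by exists false, b, c, (2 * u); rewrite expnMn expn1; ring.
by exists true, b, c, u; rewrite expn1 expn0; ring.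
Qed.

Lemma coprime_consecutive_odd k : coprime (2 * k + 1) (2 * k + 3).
Proof.
have -> : 2 * k + 3 = 2 * k + 1 + 2 by lia.
by rewrite /coprime gcdnDl -/(coprime _ 2) coprimen2 oddD oddM.
Qed.

Lemma pell_mono_square p q K x y : prime p -> prime q -> odd p -> odd q ->
  K %| 2 * p * q -> 1 < x -> x ^ 2 = 1 + K * y ^ 2 ->
  mono_square p q (x - 1) /\ mono_square p q (x + 1).
Proof.
move=> p_prime q_prime p_odd q_odd K_2pq x_gt1 pell.
have mono d u : d %| K -> mono_square p q (d * u ^ 2).
  by move=> d_K; apply: mono_square_dvd => //; apply: dvdn_trans K_2pq.
have [x_odd | x_even] := boolP (odd x).
  have [n ex] : exists n, x = 2 * n + 1.
    by exists x./2; rewrite -[x in LHS]odd_double_half x_odd -muln2; lia.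
  have y_even : ~~ odd y.
    apply: contraL K_2pq => y_odd.
    have : 4 %| K * y ^ 2 by apply/dvdnP; exists (n * (n + 1)); rewrite ex in pell; nia.
    rewrite Gauss_dvdl; last by rewrite (coprime_pexpl 2 _ (isT : 0 < 2)) coprime2n oddX.
    move=> four_K; apply/negP => /(dvdn_trans four_K).
    by rewrite (_ : 4 = 2 * 2) // -mulnA dvdn_pmul2l // dvdn2 oddM p_odd q_odd.
  have [z ey] : exists z, y = 2 * z.
    by exists y./2; rewrite -[y in LHS]odd_double_half (negbTE y_even) -muln2; lia.
  have n_gt0 : 0 < n by lia.
  have enn : n * n.+1 = K * z ^ 2.
    move: pell; rewrite ex ey (_ : (2 * n + 1) ^ 2 = 4 * (n * n.+1) + 1); last by ring.
    rewrite (_ : K * (2 * z) ^ 2 = 4 * (K * z ^ 2)); last by ring.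
    by move/eqP; rewrite [1 + _]addnC eqn_add2r eqn_pmul2l // => /eqP.
  have enn' : n.+1 * n = K * z ^ 2 by rewrite mulnC.
  have [d [u [d_K eu]]] := coprime_mul_eq_square n_gt0 (coprimenS n) enn.
  have [d' [u' [d'_K eu']]] := coprime_mul_eq_square (ltn0Sn n) (coprimeSn n) enn'.
  have -> : x - 1 = 2 * n by rewrite ex addnK.
  have -> : x + 1 = 2 * n.+1 by rewrite ex; ring.
  by split; apply: mono_square_double; [rewrite eu | rewrite eu']; apply: mono.
have [k ex] : exists k, x = 2 * k + 2.
  by exists (x./2 - 1); rewrite -[x in LHS]odd_double_half (negbTE x_even) -muln2; lia.
have ekk : (2 * k + 1) * (2 * k + 3) = K * y ^ 2.
  move: pell; rewrite ex (_ : (2 * k + 2) ^ 2 = (2 * k + 1) * (2 * k + 3) + 1); last by ring.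
  by rewrite [_ + 1]addnC => /addnI.
have ekk' : (2 * k + 3) * (2 * k + 1) = K * y ^ 2 by rewrite mulnC.
have co_k := coprime_consecutive_odd k; rewrite coprime_sym in co_k.
have [d [u [d_K eu]]] := coprime_mul_eq_square (ltn_addl _ (ltnSn 0)) (coprime_consecutive_odd k) ekk.
have [d' [u' [d'_K eu']]] := coprime_mul_eq_square (ltn_addl _ (isT : 0 < 3)) co_k ekk'.
have -> : x - 1 = 2 * k + 1 by rewrite ex addn2 subn1 addn1.
have -> : x + 1 = 2 * k + 3 by rewrite ex; lia.
by rewrite eu eu'; split; apply: mono.
Qed.

Lemma modn_pq_2pq p q : p %% 8 = 1 -> q %% 8 = 3 ->
  p * q %% 4 = 3 /\ 2 * p * q %% 8 = 6.
Proof. by move=> p8 q8; split; nia. Qed.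

Local Open Scope ring_scope.

Lemma int_mod4_cases (v : int) :
  exists s r, v = 4 * s + r /\ (r = 0 \/ r = 1 \/ r = 2 \/ r = 3).
Proof.
exists (v %/ 4)%Z, (v %% 4)%Z; split; first by rewrite {1}(divz_eq v 4) mulrC.
have r_ge0 : 0 <= (v %% 4)%Z by rewrite modz_ge0.
have r_lt4 : (v %% 4)%Z < 4 by rewrite ltz_pmod.
lia.
Qed.

(* Once the residues of a and b modulo 4 are fixed, all remaining terms are
   multiples of 4 (resp. 8), so the equation is refuted by linear arithmetic. *)
Lemma pell_neg_3mod4 (M a b : int) : a ^+ 2 - (4 * M + 3) * b ^+ 2 <> -1.
Proof.
have [s [r [-> hr]]] := int_mod4_cases a; have [t [r' [-> hr']]] := int_mod4_cases b.
by rewrite !expr2; case: hr => [->|[->|[->|->]]]; case: hr' => [->|[->|[->|->]]]; lia.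
Qed.

Lemma pell_neg_6mod8 (M a b : int) : a ^+ 2 - (8 * M + 6) * b ^+ 2 <> -1.
Proof.
have [s [r [-> hr]]] := int_mod4_cases a; have [t [r' [-> hr']]] := int_mod4_cases b.
by rewrite !expr2; case: hr => [->|[->|[->|->]]]; case: hr' => [->|[->|[->|->]]]; lia.
Qed.

Lemma unitZsqrt_norm1 (d : nat) (a b : int) : (d %% 4 = 3 \/ d %% 8 = 6)%N ->
  unitZsqrt d a b -> a ^+ 2 - d%:Z * b ^+ 2 = 1.
Proof.
move=> d_mod [// | neg]; exfalso; case: d_mod => d_mod.
  by apply: (@pell_neg_3mod4 (d %/ 4)%:Z a b); rewrite -neg; congr (_ - _ * _); lia.
by apply: (@pell_neg_6mod8 (d %/ 8)%:Z a b); rewrite -neg; congr (_ - _ * _); lia.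
Qed.

Lemma sqrt_natM (m n : nat) : sqrtC (m * n)%:R = sqrtC m%:R * sqrtC n%:R :> algC.
Proof. by rewrite natrM sqrtCM // nnegrE ler0n. Qed.

Lemma sqrt_natX (m : nat) (i : bool) : sqrtC (m ^ i)%:R = sqrtC m%:R ^+ i :> algC.
Proof. by case: i; rewrite ?expn1 ?expr1 ?expn0 ?expr0 ?sqrtC1. Qed.

Lemma norm_eq_sqrtC (K : nat) (x y : int) : x ^+ 2 - K%:Z * y ^+ 2 = 1 ->
  x%:~R ^+ 2 - y%:~R ^+ 2 * sqrtC K%:R ^+ 2 = 1 :> algC.
Proof.
move=> normE; rewrite -[RHS](rmorph1 (@intmul algC 1)) -normE.
by rewrite rmorphB rmorphXn rmorphM rmorphXn sqrtCK mulrC.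
Qed.

Lemma intr_nat_square (z : int) (m : nat) : z = (m ^ 2)%N%:Z -> z%:~R = m%:R ^+ 2 :> algC.
Proof. by move=> ->; rewrite -pmulrn natrX. Qed.

Lemma nat_square_gt0 (z : int) (m : nat) : z = (m ^ 2)%N%:Z -> 0 < z -> (0 < m)%N.
Proof. by case: m => // ->. Qed.

Lemma zsqrt_gt1 (d : nat) (x y : int) : x ^+ 2 - d%:Z * y ^+ 2 = 1 ->
  1 < zsqrt d x y -> 1 < x.
Proof.
move=> /norm_eq_sqrtC normE e_gt1; set e := zsqrt d x y in e_gt1.
have e_gt0 : 0 < e := lt_trans ltr01 e_gt1.
pose e' : algC := x%:~R - y%:~R * sqrtC d%:R.
have ee' : e * e' = 1 by rewrite -normE /e /zsqrt /e'; ring.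
have e'_gt0 : 0 < e'.
  have -> : e' = e^-1 by apply: (mulfI (lt0r_neq0 e_gt0)); rewrite ee' mulfV ?lt0r_neq0.
  by rewrite invr_gt0.
have sumE : e + e' = 2 * x%:~R by rewrite /e /e' /zsqrt; ring.
have x_gt0 : 0 < x.
  have : 0 < 2 * x%:~R :> algC by rewrite -sumE addr_gt0.
  by rewrite pmulr_rgt0 // ltr0z.
have [x_lt1 | // | x1] := ltgtP x 1; first by lia.
have e'E : e' = 2 - e by rewrite x1 mulr1z mulr1 in sumE; rewrite -sumE addrC addKr.
have : (e - 1) ^+ 2 = 1 - e * (2 - e) by ring.
rewrite -e'E ee' subrr => /eqP; rewrite sqrf_eq0 subr_eq0 => /eqP e1.
by rewrite e1 ltxx in e_gt1.
Qed.

Definition sqrt_mono (p q : nat) (a b c : bool) : algC :=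
  sqrtC 2 ^+ a * sqrtC p%:R ^+ b * sqrtC q%:R ^+ c.

Definition rat_mono (p q : nat) (z : algC) :=
  exists (r : rat) (a b c : bool), z = ratr r * sqrt_mono p q a b c.

Lemma inK_add_rat_mono p q z w : rat_mono p q z -> rat_mono p q w -> inK p q (z + w).
Proof.
move=> [r1 [a1 [b1 [c1 ->]]]] [r2 [a2 [b2 [c2 ->]]]].
exists (fun a b c => (if (a, b, c) == (a1, b1, c1) then r1 else 0) +
                     (if (a, b, c) == (a2, b2, c2) then r2 else 0)).
by rewrite /sqrt_mono; case: a1 b1 c1 a2 b2 c2 => [] [] [] [] [] [];
  rewrite !big_bool /= ?rmorphD ?rmorph0; ring.
Qed.

Lemma rat_mono_sign p q z (b : bool) : rat_mono p q z -> rat_mono p q ((-1) ^+ b * z).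
Proof.
move=> [r [a [b' [c ->]]]]; exists ((-1) ^+ b * r), a, b', c.
by rewrite rmorphM rmorph_sign mulrA.
Qed.

Lemma sqrt_mono_split p q a b c :
  sqrt_mono p q a b c = sqrtC 2 ^+ a * sqrt_mono p q false b c.
Proof. by rewrite /sqrt_mono expr0 mul1r !mulrA. Qed.

Lemma rat_mono_sqrt_half p q n : mono_square p q n -> rat_mono p q (sqrtC n%:R / sqrtC 2).
Proof.
move=> [a [b [c [u ->]]]].
have -> : sqrtC (2 ^ a * p ^ b * q ^ c * u ^ 2)%:R = u%:R * sqrt_mono p q a b c.
  by rewrite sqrt_natM natrX sqrCK ?ler0n // !sqrt_natM !sqrt_natX mulrC.
set s := sqrtC 2; have s_sq : s ^+ 2 = 2 by rewrite sqrtCK.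
have s_neq0 : s != 0 by rewrite sqrtC_eq0 pnatr_eq0.
case: a; [exists u%:R, false | exists (u%:R / 2), true]; exists b, c;
  rewrite sqrt_mono_split [in RHS]sqrt_mono_split -/s ?rmorph_nat ?fmorph_div ?rmorph_nat;
  move: (sqrt_mono _ _ _ _ _) => S; rewrite ?expr1 ?expr0.
- by field.
- by rewrite -[in RHS]s_sq; field.
Qed.

Lemma inK_sqrt_of_factors p q (K x : nat) (y : int) : (0 < x)%N ->
  ((x - 1) * (x + 1) = K * `|y| ^ 2)%N -> mono_square p q (x - 1) ->
  mono_square p q (x + 1) ->
  exists eta, inK p q eta /\ eta ^+ 2 = x%:R + y%:~R * sqrtC K%:R.
Proof.
move=> x_gt0 exy mono_xm1 mono_xp1.
set sgn : algC := (-1) ^+ (y < 0)%R.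
exists (sqrtC (x - 1)%:R / sqrtC 2 + sgn * (sqrtC (x + 1)%:R / sqrtC 2)); split.
  by apply: inK_add_rat_mono; [|apply: rat_mono_sign]; apply: rat_mono_sqrt_half.
have prod_sqrt : sqrtC (x - 1)%:R * sqrtC (x + 1)%:R = `|y|%:R * sqrtC K%:R :> algC.
  by rewrite -sqrt_natM exy sqrt_natM natrX sqrCK ?ler0n // mulrC.
have -> : y%:~R = sgn * `|y|%:R :> algC by rewrite {1}(intEsign y) rmorphM rmorph_sign.
have s_neq0 : sqrtC 2 != 0 :> algC by rewrite sqrtC_eq0 pnatr_eq0.
rewrite (_ : (_ + _) ^+ 2 = ((sqrtC (x - 1)%:R) ^+ 2 + sgn ^+ 2 * (sqrtC (x + 1)%:R) ^+ 2
    + 2 * sgn * (sqrtC (x - 1)%:R * sqrtC (x + 1)%:R)) / sqrtC 2 ^+ 2); last by field.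
by rewrite !sqrtCK sqrr_sign prod_sqrt natrB // natrD; field.
Qed.

Lemma inK_sqrt_pell p q K (x y : int) : prime p -> prime q -> odd p -> odd q ->
  (K %| 2 * p * q)%N -> 1 < x -> x ^+ 2 - K%:Z * y ^+ 2 = 1 ->
  exists eta, inK p q eta /\ eta ^+ 2 = zsqrt K x y.
Proof.
case: x => [X | //] p_prime q_prime p_odd q_odd K_2pq X_gt1 normE.
have pell : (X ^ 2 = 1 + K * `|y| ^ 2)%N by nia.
have [mono_Xm1 mono_Xp1] := pell_mono_square p_prime q_prime p_odd q_odd K_2pq X_gt1 pell.
have exy : ((X - 1) * (X + 1) = K * `|y| ^ 2)%N by rewrite -subn_sqr pell exp1n addKn.
exact: inK_sqrt_of_factors (ltnW X_gt1) exy mono_Xm1 mono_Xp1.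
Qed.

Definition sign_conj (t : {rmorphism algC -> algC}) (b : bool) (z : algC) :=
  t z = (-1) ^+ b * z.

Definition conj_value (s e : algC) (a d : bool) : algC :=
  (-1) ^+ a * (if d then s else e).

Lemma sign_conj1 (t : {rmorphism algC -> algC}) z : t z = z -> sign_conj t false z.
Proof. by rewrite /sign_conj mul1r. Qed.

Lemma sign_conjN (t : {rmorphism algC -> algC}) z : t z = - z -> sign_conj t true z.
Proof. by rewrite /sign_conj expr1 mulN1r. Qed.

Lemma sign_conj_nat (t : {rmorphism algC -> algC}) (n : nat) : sign_conj t false n%:R.
Proof. by apply: sign_conj1; rewrite rmorph_nat. Qed.

Lemma sign_conjM (t : {rmorphism algC -> algC}) b c z w :
  sign_conj t b z -> sign_conj t c w -> sign_conj t (b (+) c) (z * w).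
Proof. by rewrite /sign_conj rmorphM signr_addb => -> ->; ring. Qed.

Lemma sign_conjV (t : {rmorphism algC -> algC}) b z :
  sign_conj t b z -> sign_conj t b z^-1.
Proof. by rewrite /sign_conj fmorphV => ->; rewrite invfM invr_sign. Qed.

Lemma sign_conjX (t : {rmorphism algC -> algC}) b z (i : bool) :
  sign_conj t b z -> sign_conj t (b && i) (z ^+ i).
Proof. by case: i; rewrite ?andbT ?andbF // => _; rewrite /sign_conj rmorph1 mul1r. Qed.

Lemma sign_conj_comp (t u : {rmorphism algC -> algC}) b c z :
  sign_conj t b z -> sign_conj u c z -> sign_conj (t \o u) (b (+) c) z.
Proof. by rewrite /sign_conj /= => tz ->; rewrite rmorphM rmorph_sign tz signr_addb; ring. Qed.

Section SquareRootOfUnit.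

Variables (x y : int) (r s A eta : algC).
Hypotheses (normE : x%:~R ^+ 2 - y%:~R ^+ 2 * r ^+ 2 = 1) (s_sq : s ^+ 2 = 1)
  (A_neq0 : A != 0) (A_sq : 2 * A ^+ 2 = x%:~R + s)
  (eta_sq : eta ^+ 2 = x%:~R + y%:~R * r).

Lemma mul_conj_sqrt_unit t a d : sign_conj t a A -> sign_conj t d r ->
  eta * t eta = conj_value s (x%:~R + y%:~R * r) a d.
Proof.
move: normE A_sq eta_sq; set X : algC := x%:~R; set Y : algC := y%:~R.
move=> norm eA eeta tA tr.
pose B := Y * r / (2 * A).
have eB : 2 * B ^+ 2 = X - s.
  apply: (mulIf (_ : 2 * A ^+ 2 != 0)); first by rewrite mulf_neq0 ?expf_neq0 ?pnatr_eq0.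
  have -> : 2 * B ^+ 2 * (2 * A ^+ 2) = Y ^+ 2 * r ^+ 2 by rewrite /B; field.
  rewrite eA (_ : (X - s) * (X + s) = X ^+ 2 - s ^+ 2); last by ring.
  by rewrite s_sq -norm; ring.
have eAB : (A + B) ^+ 2 = X + Y * r.
  have -> : (A + B) ^+ 2 = (2 * A ^+ 2 + 2 * B ^+ 2) / 2 + 2 * A * B by field.
  by rewrite eA eB /B; field.
have es : s = A ^+ 2 - B ^+ 2.
  by apply: (@mulfI _ 2); rewrite ?pnatr_eq0 // mulrBr eA eB; ring.
have tB : t B = (-1) ^+ (a (+) d) * B.
  rewrite /B fmorph_div !rmorphM rmorph_nat /Y rmorph_int tA tr signr_addb.
  by case: (a); case: (d); rewrite /= ?expr0 ?expr1; field.
move: eeta; rewrite /conj_value -eAB => /eqP; rewrite eqf_sqr => /orP[]/eqP ->;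
  rewrite ?rmorphN ?mulrNN rmorphD tA tB signr_addb;
  by case: (d); rewrite /= ?expr0 ?expr1 ?es; ring.
Qed.

Lemma norm_tuple_sign (t1 t2 t3 : {rmorphism algC -> algC}) a1 a2 a3 d1 d2 d3 :
  sign_conj t1 a1 A -> sign_conj t2 a2 A -> sign_conj t3 a3 A ->
  sign_conj t1 d1 r -> sign_conj t2 d2 r -> sign_conj t3 d3 r ->
  let v := conj_value s (x%:~R + y%:~R * r) in
  norm_tuple t1 t2 t3 eta =
    (v a2 d2, v (a1 (+) a2) (d1 (+) d2), v (a1 (+) a3) (d1 (+) d3),
     v (a2 (+) a3) (d2 (+) d3), v a1 d1).
Proof.
move=> tA1 tA2 tA3 tr1 tr2 tr3 v.
rewrite /norm_tuple; congr (_, _, _, _, _); last exact: mul_conj_sqrt_unit.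
- exact: mul_conj_sqrt_unit.
- exact (mul_conj_sqrt_unit (sign_conj_comp tA1 tA2) (sign_conj_comp tr1 tr2)).
- exact (mul_conj_sqrt_unit (sign_conj_comp tA1 tA3) (sign_conj_comp tr1 tr3)).
- exact (mul_conj_sqrt_unit (sign_conj_comp tA2 tA3) (sign_conj_comp tr2 tr3)).
Qed.

End SquareRootOfUnit.

Section Biquadratic.

Variables (p q : nat) (t1 t2 t3 : {rmorphism algC -> algC}).
Hypotheses (t1_2 : t1 (sqrtC 2) = - sqrtC 2) (t1_p : t1 (sqrtC p%:R) = sqrtC p%:R)
  (t1_q : t1 (sqrtC q%:R) = sqrtC q%:R)
  (t2_2 : t2 (sqrtC 2) = sqrtC 2) (t2_p : t2 (sqrtC p%:R) = - sqrtC p%:R)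
  (t2_q : t2 (sqrtC q%:R) = sqrtC q%:R)
  (t3_2 : t3 (sqrtC 2) = sqrtC 2) (t3_p : t3 (sqrtC p%:R) = sqrtC p%:R)
  (t3_q : t3 (sqrtC q%:R) = - sqrtC q%:R).

Lemma sign_conj_sqrt_mono (i j k : bool) :
  let z := sqrtC (2 ^ i * p ^ j * q ^ k)%:R in
  [/\ sign_conj t1 i z, sign_conj t2 j z & sign_conj t3 k z].
Proof.
rewrite /= !sqrt_natM !sqrt_natX; split.
- have := sign_conjM (sign_conjM (sign_conjX i (sign_conjN t1_2))
    (sign_conjX j (sign_conj1 t1_p))) (sign_conjX k (sign_conj1 t1_q)).
  by rewrite /= !addbF.
- have := sign_conjM (sign_conjM (sign_conjX i (sign_conj1 t2_2))
    (sign_conjX j (sign_conjN t2_p))) (sign_conjX k (sign_conj1 t2_q)).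
  by rewrite /= addbF.
- exact: sign_conjM (sign_conjM (sign_conjX i (sign_conj1 t3_2))
    (sign_conjX j (sign_conj1 t3_p))) (sign_conjX k (sign_conjN t3_q)).
Qed.

Hypothesis p_gt0 : (0 < p)%N.

Lemma norm_tuple_of_square (r : algC) (d1 d2 d3 : bool) (x y : int) (i j : bool)
    (m : nat) (s eta : algC) :
  sign_conj t1 d1 r -> sign_conj t2 d2 r -> sign_conj t3 d3 r ->
  x%:~R ^+ 2 - y%:~R ^+ 2 * r ^+ 2 = 1 -> s ^+ 2 = 1 -> (0 < m)%N ->
  (2 ^ i * p ^ j)%N%:R * (x%:~R + s) = m%:R ^+ 2 -> eta ^+ 2 = x%:~R + y%:~R * r ->
  let v := conj_value s (x%:~R + y%:~R * r) in
  norm_tuple t1 t2 t3 eta =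
    (v j d2, v (~~ i (+) j) (d1 (+) d2), v (~~ i) (d1 (+) d3), v j (d2 (+) d3), v (~~ i) d1).
Proof.
move=> r1 r2 r3 norm s2 m_gt0 ecm eeta v.
set c := (2 ^ i * p ^ j)%N in ecm.
have [c1 c2 c3] := sign_conj_sqrt_mono i j false; rewrite /= expn0 muln1 -/c in c1 c2 c3.
have c0 : c%:R != 0 :> algC.
  apply: contra_neq (_ : m%:R ^+ 2 != 0 :> algC) => [c0|]; first by rewrite -ecm c0 mul0r.
  by rewrite expf_neq0 // pnatr_eq0 -lt0n.
pose A : algC := m%:R / (sqrtC 2 * sqrtC c%:R).
have sqrt2_neq0 : sqrtC 2 != 0 :> algC by rewrite sqrtC_eq0 pnatr_eq0.
have sqrtc_neq0 : sqrtC c%:R != 0 :> algC by rewrite sqrtC_eq0.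
have A_neq0 : A != 0 by rewrite mulf_neq0 ?invr_eq0 ?mulf_neq0 // pnatr_eq0 -lt0n.
have A_sq : 2 * A ^+ 2 = x%:~R + s.
  apply: (mulfI c0); by rewrite ecm /A expr_div_n exprMn !sqrtCK; field.
have := norm_tuple_sign norm s2 A_neq0 A_sq eeta
  (sign_conjM (sign_conj_nat _ _) (sign_conjV (sign_conjM (sign_conjN t1_2) c1)))
  (sign_conjM (sign_conj_nat _ _) (sign_conjV (sign_conjM (sign_conj1 t2_2) c2)))
  (sign_conjM (sign_conj_nat _ _) (sign_conjV (sign_conjM (sign_conj1 t3_2) c3)))
  r1 r2 r3.
by rewrite /= !addbF.
Qed.

Lemma norm_tuple_cases (D : nat) (d1 d2 d3 : bool) (x y : int) (eta : algC) :
  sign_conj t1 d1 (sqrtC D%:R) -> sign_conj t2 d2 (sqrtC D%:R) ->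
  sign_conj t3 d3 (sqrtC D%:R) ->
  1 < x -> x ^+ 2 - D%:Z * y ^+ 2 = 1 -> eta ^+ 2 = zsqrt D x y ->
  let v s := conj_value s (zsqrt D x y) in
  [/\ is_nat_square (x - 1) -> norm_tuple t1 t2 t3 eta =
        (v (-1) false d2, v (-1) true (d1 (+) d2), v (-1) true (d1 (+) d3),
         v (-1) false (d2 (+) d3), v (-1) true d1),
      is_nat_square (p%:Z * (x - 1)) -> norm_tuple t1 t2 t3 eta =
        (v (-1) true d2, v (-1) false (d1 (+) d2), v (-1) true (d1 (+) d3),
         v (-1) true (d2 (+) d3), v (-1) true d1) &
      is_nat_square (2 * p%:Z * (x + 1)) -> norm_tuple t1 t2 t3 eta =
        (v 1 true d2, v 1 true (d1 (+) d2), v 1 false (d1 (+) d3),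
         v 1 true (d2 (+) d3), v 1 false d1)].
Proof.
move=> r1 r2 r3 x_gt1 /norm_eq_sqrtC norm eeta v.
have sqrN1 : (-1) ^+ 2 = 1 :> algC by rewrite sqrrN expr1n.
split=> -[m /[dup] /nat_square_gt0 m_gt0 /intr_nat_square m_sq].
- rewrite (norm_tuple_of_square (i := false) (j := false) r1 r2 r3 norm sqrN1 (m_gt0 _) _ eeta) //.
    by lia.
  by rewrite -m_sq intrB mul1r.
- rewrite (norm_tuple_of_square (i := false) (j := true) r1 r2 r3 norm sqrN1 (m_gt0 _) _ eeta) //.
    by nia.
  by rewrite -m_sq intrM intrB mul1n expn1.
- rewrite (norm_tuple_of_square (i := true) (j := true) r1 r2 r3 norm (expr1n _ 2)
    (m_gt0 _) _ eeta) //.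
    by nia.
  by rewrite !expn1 natrM -m_sq !intrM (intrD _ x).
Qed.

Lemma norm_tuple_2pq (x y : int) :
  1 < x -> x ^+ 2 - (2 * p * q)%N%:Z * y ^+ 2 = 1 ->
  forall eta, eta ^+ 2 = zsqrt (2 * p * q) x y ->
  let e := zsqrt (2 * p * q) x y in
  [/\ is_nat_square (x - 1) -> norm_tuple t1 t2 t3 eta = (-1, - e, - e, e, 1),
      is_nat_square (p%:Z * (x - 1)) -> norm_tuple t1 t2 t3 eta = (1, e, - e, - e, 1) &
      is_nat_square (2 * p%:Z * (x + 1)) ->
        norm_tuple t1 t2 t3 eta = (-1, - e, e, - e, 1)].
Proof.
move=> x_gt1 norm eta eeta e.
have [r1 r2 r3] := sign_conj_sqrt_mono true true true; rewrite /= !expn1 in r1 r2 r3.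
have [case1 case2 case3] := norm_tuple_cases r1 r2 r3 x_gt1 norm eeta.
by split=> [/case1|/case2|/case3] ->; rewrite /conj_value /= !(expr0, expr1, mul1r, mulN1r, opprK).
Qed.

Lemma norm_tuple_pq (x y : int) :
  1 < x -> x ^+ 2 - (p * q)%N%:Z * y ^+ 2 = 1 ->
  forall eta, eta ^+ 2 = zsqrt (p * q) x y ->
  let e := zsqrt (p * q) x y in
  [/\ is_nat_square (x - 1) -> norm_tuple t1 t2 t3 eta = (-1, 1, 1, e, - e),
      is_nat_square (p%:Z * (x - 1)) -> norm_tuple t1 t2 t3 eta = (1, -1, 1, - e, - e) &
      is_nat_square (2 * p%:Z * (x + 1)) ->
        norm_tuple t1 t2 t3 eta = (-1, -1, 1, - e, e)].
Proof.
move=> x_gt1 norm eta eeta e.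
have [r1 r2 r3] := sign_conj_sqrt_mono false true true.
rewrite /= expn0 mul1n !expn1 in r1 r2 r3.
have [case1 case2 case3] := norm_tuple_cases r1 r2 r3 x_gt1 norm eeta.
by split=> [/case1|/case2|/case3] ->; rewrite /conj_value /= !(expr0, expr1, mul1r, mulN1r, opprK).
Qed.

End Biquadratic.

Theorem mainTheorem5 (p q : nat) (x y v w : int)
  (t1 t2 t3 : {rmorphism algC -> algC}) :
  prime p -> prime q -> (p %% 8 = 1)%N -> (q %% 8 = 3)%N ->
  legendre_is_one p q ->
  fund_unit (2 * p * q) x y -> fund_unit (p * q) v w ->
  t1 (sqrtC 2) = - sqrtC 2 -> t1 (sqrtC p%:R) = sqrtC p%:R ->
  t1 (sqrtC q%:R) = sqrtC q%:R ->
  t2 (sqrtC 2) = sqrtC 2 -> t2 (sqrtC p%:R) = - sqrtC p%:R ->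
  t2 (sqrtC q%:R) = sqrtC q%:R ->
  t3 (sqrtC 2) = sqrtC 2 -> t3 (sqrtC p%:R) = sqrtC p%:R ->
  t3 (sqrtC q%:R) = - sqrtC q%:R ->
  let e1 := zsqrt (2 * p * q) x y in
  let e2 := zsqrt (p * q) v w in
  [/\ (exists eta, inK p q eta /\ eta ^+ 2 = e1),
      (exists eta, inK p q eta /\ eta ^+ 2 = e2),
      (forall eta, inK p q eta -> eta ^+ 2 = e1 ->
        [/\ is_nat_square (x - 1) ->
              norm_tuple t1 t2 t3 eta = (-1, - e1, - e1, e1, 1),
            is_nat_square (p%:Z * (x - 1)) ->
              norm_tuple t1 t2 t3 eta = (1, e1, - e1, - e1, 1) &
            is_nat_square (2 * p%:Z * (x + 1)) ->
              norm_tuple t1 t2 t3 eta = (-1, - e1, e1, - e1, 1)]) &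
      (forall eta, inK p q eta -> eta ^+ 2 = e2 ->
        [/\ is_nat_square (v - 1) ->
              norm_tuple t1 t2 t3 eta = (-1, 1, 1, e2, - e2),
            is_nat_square (p%:Z * (v - 1)) ->
              norm_tuple t1 t2 t3 eta = (1, -1, 1, - e2, - e2) &
            is_nat_square (2 * p%:Z * (v + 1)) ->
              norm_tuple t1 t2 t3 eta = (-1, -1, 1, - e2, e2)])].
Proof.
move=> p_prime q_prime p8 q8 _ [unit1 e1_gt1 _] [unit2 e2_gt1 _]
  t1_2 t1_p t1_q t2_2 t2_p t2_q t3_2 t3_p t3_q e1 e2.
have [pq4 pq8] := modn_pq_2pq p8 q8.
have norm1 := unitZsqrt_norm1 (or_intror pq8) unit1.
have norm2 := unitZsqrt_norm1 (or_introl pq4) unit2.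
have x_gt1 := zsqrt_gt1 norm1 e1_gt1; have v_gt1 := zsqrt_gt1 norm2 e2_gt1.
have p_odd : odd p by rewrite -(@odd_mod p 8) ?p8.
have q_odd : odd q by rewrite -(@odd_mod q 8) ?q8.
have pq_2pq : (p * q %| 2 * p * q)%N by rewrite -mulnA dvdn_mull.
split.
- exact: inK_sqrt_pell p_prime q_prime p_odd q_odd (dvdnn _) x_gt1 norm1.
- exact: inK_sqrt_pell p_prime q_prime p_odd q_odd pq_2pq v_gt1 norm2.
- move=> eta _; exact: (norm_tuple_2pq t1_2 t1_p t1_q t2_2 t2_p t2_q t3_2 t3_p t3_q
    (prime_gt0 p_prime) x_gt1 norm1).
- move=> eta _; exact: (norm_tuple_pq t1_2 t1_p t1_q t2_2 t2_p t2_q t3_2 t3_p t3_q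
    (prime_gt0 p_prime) v_gt1 norm2).
Qed.
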